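(* Let $D$ be an integral domain with quotient field $K$ and $\mathcal S$ a multiplicative subset of $D[X]$ ($0\notin\mathcal S$), and let $\circlearrowleft_{\mathcal S}$ be the semistar operation $E\mapsto ED[X]_{\mathcal S}\cap K$ on $D$. Then: (f) $\circlearrowleft_{\mathcal S}$ is a (semi)star operation on $D$ (i.e. $D^{\circlearrowleft_{\mathcal S}}=D$) if and only if $\mathcal S\subseteq\mathcal N^{v_D}$, if and only if $D=\bigcap\{D_P\mid P\in\boldsymbol\nabla(\mathcal S)\}$; (g) the map $\mathcal S\mapsto\circlearrowleft_{\mathcal S}$ is a bijection between the set of extended saturated multiplicative subsets of $D[X]$ and the set of stable semistar operations of finite type on $D$; it restricts to a bijection between the extended saturated multiplicative subsets of $D[X]$ contained in $\mathcal N^{v_D}$ and the stable (semi)star operations of finite type on $D$; (h) if $\mathcal S$ is extended saturated, then $\mathrm{Na}(D,v_D)=D[X]_{\mathcal S}$ if and only if $\mathcal S=\mathcal N^{v_D}$.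
   Context: $\overline{\boldsymbol F}(D)$ is the set of nonzero $D$-submodules of $K$. A semistar operation on $D$ is a map $\star:\overline{\boldsymbol F}(D)\to\overline{\boldsymbol F}(D)$ with $(xE)^\star=xE^\star$ for $0\ne x\in K$, $E\subseteq F\Rightarrow E^\star\subseteq F^\star$, $E\subseteq E^\star$ and $(E^\star)^\star=E^\star$; it is a (semi)star operation if $D^\star=D$. $\star$ is of finite type if $E^\star=\bigcup\{F^\star\mid F\subseteq E,\ F$ a nonzero finitely generated fractional ideal$\}$ for all $E$, and stable if $(E\cap F)^\star=E^\star\cap F^\star$. $v_D$ is the operation $E^{v}=(D:(D:E))$. For $f\in K[X]$, $\mathrm{c}_D(f)$ is the fractional ideal generated by its coefficients; $\mathcal N^\star=\{g\in D[X]\mid g\ne0,\ \mathrm{c}_D(g)^\star=D^\star\}$ and $\mathrm{Na}(D,\star)=D[X]_{\mathcal N^\star}$. For a multiplicative set $\mathcal S\subseteq D[X]$: its extended saturation is $\mathcal S^\sharp=D[X]\setminus\bigcup\{P[X]\mid P\in\mathrm{Spec}(D),\ P[X]\cap\mathcal S=\emptyset\}$; $\mathcal S$ is extended saturated if $\mathcal S=\mathcal S^\sharp$; $\boldsymbol\Delta(\mathcal S)=\{P\in\mathrm{Spec}(D)\mid P[X]\cap\mathcal S=\emptyset\}$ and $\boldsymbol\nabla(\mathcal S)$ is the set of maximal elements of $\boldsymbol\Delta(\mathcal S)$. *)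

From HB Require Import structures.
From mathcomp Require Import all_boot all_order all_algebra.
From mathcomp Require Import fraction.
Set Implicit Arguments. Unset Strict Implicit. Unset Printing Implicit Defensive.
Import GRing.Theory.
Local Open Scope ring_scope.

Section SemistarDefs.
Variable K : fieldType.
Variable D : K -> Prop.

Definition sub (E F : K -> Prop) := forall x, E x -> F x.
Definition seteq (E F : K -> Prop) := forall x, E x <-> F x.
Definition setI (E F : K -> Prop) : K -> Prop := fun x => E x /\ F x.
Definition scale (a : K) (E : K -> Prop) : K -> Prop :=
  fun y => exists e, E e /\ y = a * e.

(* D is an integral domain (subring of the field K) with quotient field K *)
Definition domain_with_qf :=
  [/\ D 0, D 1, (forall x y, D x -> D y -> D (x - y)),
      (forall x y, D x -> D y -> D (x * y)) &
      (forall x, exists a b, [/\ D a, D b, b != 0 & x = a / b])].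

Definition Fbar (E : K -> Prop) :=
  [/\ (exists x, E x /\ x != 0), E 0,
      (forall x y, E x -> E y -> E (x + y)) &
      (forall d x, D d -> E x -> E (d * x))].

Definition span (s : seq K) : K -> Prop :=
  fun x => exists d : nat -> K, (forall i, D (d i)) /\
           x = \sum_(i < size s) d i * s`_i.

Definition fg_nonzero (F : K -> Prop) :=
  exists s : seq K, seteq F (span s) /\ has (fun a => a != 0) s.

Definition semistar (star : (K -> Prop) -> (K -> Prop)) :=
  [/\ (forall E, Fbar E -> Fbar (star E)),
      (forall x E, x != 0 -> Fbar E -> seteq (star (scale x E)) (scale x (star E))),
      (forall E F, Fbar E -> Fbar F -> sub E F -> sub (star E) (star F)),
      (forall E, Fbar E -> sub E (star E)) &
      (forall E, Fbar E -> seteq (star (star E)) (star E))].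

Definition semistar_star (star : (K -> Prop) -> (K -> Prop)) :=
  semistar star /\ seteq (star D) D.

Definition finite_type (star : (K -> Prop) -> (K -> Prop)) :=
  forall E, Fbar E ->
    seteq (star E) (fun x => exists F, [/\ fg_nonzero F, sub F E & star F x]).

Definition stable (star : (K -> Prop) -> (K -> Prop)) :=
  forall E F, Fbar E -> Fbar F -> seteq (star (setI E F)) (setI (star E) (star F)).

Definition star_eq (s1 s2 : (K -> Prop) -> (K -> Prop)) :=
  forall E, Fbar E -> seteq (s1 E) (s2 E).

Definition colon (E : K -> Prop) : K -> Prop := fun x => forall e, E e -> D (x * e).
Definition vop (E : K -> Prop) : K -> Prop := colon (colon E).

Definition DX (g : {poly K}) := forall i, D g`_i.
Definition content (g : {poly K}) : K -> Prop := span (polyseq g).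

Definition Nstar (star : (K -> Prop) -> (K -> Prop)) : {poly K} -> Prop :=
  fun g => [/\ DX g, g != 0 & seteq (star (content g)) (star D)].

Definition multiplicative (S : {poly K} -> Prop) :=
  [/\ (forall g, S g -> DX g), S 1,
      (forall f g, S f -> S g -> S (f * g)) & ~ S 0].

Definition psub (S T : {poly K} -> Prop) := forall g, S g -> T g.
Definition pseteq (S T : {poly K} -> Prop) := forall g, S g <-> T g.

Definition prime_ideal (P : K -> Prop) :=
  [/\ sub P D, P 0, (forall x y, P x -> P y -> P (x + y)),
      (forall d x, D d -> P x -> P (d * x)) &
      (~ P 1 /\ (forall x y, D x -> D y -> P (x * y) -> P x \/ P y))].

Definition PX (P : K -> Prop) (g : {poly K}) := forall i, P g`_i.

Definition Delta (S : {poly K} -> Prop) (P : K -> Prop) :=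
  prime_ideal P /\ forall g, S g -> ~ PX P g.

Definition Nabla (S : {poly K} -> Prop) (P : K -> Prop) :=
  Delta S P /\ forall Q, Delta S Q -> sub P Q -> sub Q P.

Definition ext_saturation (S : {poly K} -> Prop) : {poly K} -> Prop :=
  fun f => DX f /\ forall P, Delta S P -> ~ PX P f.

Definition ext_saturated (S : {poly K} -> Prop) := pseteq S (ext_saturation S).

Definition DP (P : K -> Prop) : K -> Prop :=
  fun x => exists a b, [/\ D a, D b, ~ P b & x = a / b].

(* D[X]_S inside the field of rational functions K(X) *)
Definition tofr (p : {poly K}) : {fraction {poly K}} := FracField.tofrac p.
Definition embK (x : K) : {fraction {poly K}} := tofr (x%:P).

Definition locS (S : {poly K} -> Prop) : {fraction {poly K}} -> Prop :=
  fun u => exists f g, [/\ DX f, S g & u = tofr f / tofr g].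

(* E D[X]_S : D[X]_S-submodule of K(X) generated by E *)
Definition EDXS (S : {poly K} -> Prop) (E : K -> Prop) : {fraction {poly K}} -> Prop :=
  fun z => exists (n : nat) (e : nat -> K) (u : nat -> {fraction {poly K}}),
    (forall i, (i < n)%N -> E (e i) /\ locS S (u i)) /\
    z = \sum_(i < n) embK (e i) * u i.

(* the operation E |-> E D[X]_S \cap K *)
Definition circ (S : {poly K} -> Prop) (E : K -> Prop) : K -> Prop :=
  fun x => EDXS S E (embK x).

Definition Na (star : (K -> Prop) -> (K -> Prop)) := locS (Nstar star).

End SemistarDefs.

(* The whole proof rests on a concrete description of the operation
   circ_S : E |-> E D[X]_S \cap K (lemma [circP]): for a D-submodule E of K,
   x lies in E^circ_S iff x * g has all its coefficients in E for some g in S.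
   From it we derive:
   - (f) D^circ_S = D iff every g in S satisfies (D : c(g)) = D, i.e. S is
     contained in N^v; and the latter holds iff D is the intersection of the
     D_P, P maximal among primes with P[X] \cap S = 0.  The nontrivial
     direction uses Zorn's lemma: an ideal avoiding S is contained in a
     maximal one, which is prime by Gauss's lemma ([PX_prime]).
   - (g) circ_T is always a stable semistar operation of finite type; it
     determines an extended saturated T (localizing at P D_P recovers which
     P[X] meet T); and every stable finite type operation star is circ_T for
     T = {g | c(g) lies in no nonzero prime P with 1 \notin P^star}; the key
     point, again via Zorn, is that 1 \in c(g)^star for such g.
   - (h) is a direct comparison of the two localizations. *)

From Pilot Require Import Defs.
From HB Require Import structures.
From mathcomp Require Import all_boot all_order all_algebra fraction.
From mathcomp Require Import boolp ring.
From mathcomp Require classical_sets.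
Set Implicit Arguments. Unset Strict Implicit. Unset Printing Implicit Defensive.
Import GRing.Theory.
Local Open Scope ring_scope.

(* [Defs] names that are also defined by the algebra library. *)
Local Notation span := Defs.span.
Local Notation setI := Defs.setI.
Local Notation multiplicative := Defs.multiplicative.

Section ZornAbove.
Import classical_sets.
Local Open Scope classical_set_scope.

Lemma zorn_above (T : Type) (P : (T -> Prop) -> Prop) (J0 : T -> Prop) :
  P J0 ->
  (forall C : (T -> Prop) -> Prop, (forall c, C c -> P c /\ (forall x, J0 x -> c x)) ->
     (forall a b, C a -> C b -> (forall x, a x -> b x) \/ (forall x, b x -> a x)) ->
     (exists c, C c) -> P (fun x => exists c, C c /\ c x)) ->
  exists M, [/\ P M, (forall x, J0 x -> M x) &
    forall J, P J -> (forall x, M x -> J x) -> forall x, J x -> M x].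
Proof.
move=> PJ0 Pch.
(* Adding the subsets of J0 makes the family closed under all chain unions. *)
pose P' (A : set T) := (P A /\ J0 `<=` A) \/ A `<=` J0.
have P'ch F : F `<=` P' -> total_on F subset -> P' (\bigcup_(X in F) X).
  move=> FP' Ftot.
  have [[c0 Fc0 [Pc0 J0c0]]|none] := pselect (exists2 c, F c & P c /\ J0 `<=` c); last first.
    right=> x [X FX Xx]; case: (FP' X FX) => [hX|]; last by apply.
    by case: none; exists X.
  left; pose C := F `&` (fun c => P c /\ J0 `<=` c).
  have -> : \bigcup_(X in F) X = (fun x => exists c, C c /\ c x) :> set T.
    apply: funext => x; apply: propext; split; last by move=> [c [[Fc _] cx]]; exists c.
    move=> [X FX Xx]; case: (FP' X FX) => [hX|XJ0]; first by exists X.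
    by exists c0; split => //; apply: J0c0; apply: XJ0.
  split; last by move=> x /J0c0 c0x; exists c0.
  apply: Pch; [by move=> c [] | by move=> a b [Fa _] [Fb _]; apply: Ftot | by exists c0].
have [M [P'M Mmax]] := Zorn_bigcup P'ch.
have [PM J0M] : P M /\ J0 `<=` M.
  case: P'M => // MJ0; have [J0M|nJ0M] := pselect (J0 `<=` M).
    have -> : M = J0 by apply: funext => x; apply: propext; split=> [/MJ0|/J0M].
    by split.
  by case: (Mmax J0); [split=> // | right].
exists M; split=> // J PJ MJ; apply: contrapT => nJM; apply: (Mmax J); first by split.
by left; split=> // x /J0M /MJ.
Qed.

End ZornAbove.

Lemma chain_fin (T : Type) (C : (T -> Prop) -> Prop) (z : T) :
  (forall a b, C a -> C b -> (forall x, a x -> b x) \/ (forall x, b x -> a x)) ->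
  (exists c, C c) -> (forall c, C c -> c z) ->
  forall n (h : nat -> T), (forall k, (k < n)%N -> exists c, C c /\ c (h k)) ->
  exists c, C c /\ forall k, (k < n)%N -> c (h k).
Proof.
move=> ch [c0 Cc0] hz; elim=> [|n IH] h hh; first by exists c0.
have [c [Cc hc]] := IH h (fun k hk => hh k (ltnW hk)).
have [c' [Cc' hc']] := hh n (ltnSn n).
case: (ch c c' Cc Cc') => sub1.
- exists c'; split=> // k; rewrite ltnS leq_eqVlt => /orP [/eqP ->//|hk].
  by apply: sub1; apply: hc.
- exists c; split=> // k; rewrite ltnS leq_eqVlt => /orP [/eqP ->|hk]; last exact: hc.
  by apply: sub1.
Qed.

Lemma least_index (Q : nat -> Prop) n : Q n ->
  exists m, Q m /\ forall k, (k < m)%N -> ~ Q k.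
Proof.
move=> Qn; have ex : exists n, `[< Q n >] by exists n; apply/asboolP.
case: (ex_minnP ex) => m /asboolP Qm mmin; exists m; split=> // k km /asboolP /mmin.
by rewrite leqNgt km.
Qed.

Section Domain.
Variable K : fieldType.
Variable D : K -> Prop.
Hypothesis hD : domain_with_qf D.

Lemma D0 : D 0. Proof. by case: hD. Qed.
Lemma D1 : D 1. Proof. by case: hD. Qed.
Lemma DB x y : D x -> D y -> D (x - y). Proof. by case: hD => _ _ h _ _; apply: h. Qed.
Lemma DM x y : D x -> D y -> D (x * y). Proof. by case: hD => _ _ _ h _; apply: h. Qed.
Lemma DN x : D x -> D (- x). Proof. by move=> h; rewrite -sub0r; apply: DB => //; apply: D0. Qed.
Lemma DD x y : D x -> D y -> D (x + y).
Proof. by move=> hx hy; rewrite -[y]opprK; apply: DB => //; apply: DN. Qed.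
Lemma Dbool (b : bool) : D b%:R. Proof. by case: b; [apply: D1 | apply: D0]. Qed.

Definition submodule (E : K -> Prop) :=
  [/\ E 0, (forall x y, E x -> E y -> E (x + y)) & (forall d x, D d -> E x -> E (d * x))].

Definition ideal (J : K -> Prop) := sub J D /\ submodule J.

Lemma submodule_D : submodule D.
Proof. split; [exact: D0 | exact: DD | move=> d x; exact: DM]. Qed.

Lemma submodule_Fbar E : Fbar D E -> submodule E.
Proof. by case. Qed.

Lemma submodule_prime P : prime_ideal D P -> submodule P.
Proof. by case. Qed.

Lemma submodule_ext E F : submodule E -> seteq E F -> submodule F.
Proof.
move=> [h0 h1 h2] e; split; first by apply/e.
- by move=> x y /e hx /e hy; apply/e; apply: h1.
- by move=> d x hd /e hx; apply/e; apply: h2.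
Qed.

Lemma submoduleN E x : submodule E -> E x -> E (- x).
Proof. by move=> [_ _ h] hx; rewrite -mulN1r; apply: h => //; apply: DN; apply: D1. Qed.

Lemma submoduleB E x y : submodule E -> E x -> E y -> E (x - y).
Proof. by move=> hE hx hy; case: (hE) => _ h _; apply: h => //; apply: submoduleN. Qed.

Lemma submodule_sum E n (F : 'I_n -> K) : submodule E -> (forall i, E (F i)) -> E (\sum_i F i).
Proof. by move=> [h0 h1 _] hF; apply: (big_ind E). Qed.

Lemma submodule_mulr E d x : submodule E -> D d -> E x -> E (x * d).
Proof. by move=> [_ _ h] hd hx; rewrite mulrC; apply: h. Qed.

Lemma submodule_setI E F : submodule E -> submodule F -> submodule (setI E F).
Proof.
move=> [h0 h1 h2] [k0 k1 k2]; split; first by split.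
- by move=> x y [? ?] [? ?]; split; [apply: h1|apply: k1].
- by move=> d x hd [? ?]; split; [apply: h2|apply: k2].
Qed.

Lemma submodule_scale a E : submodule E -> submodule (scale a E).
Proof.
move=> [h0 h1 h2]; split; first by exists 0; rewrite mulr0.
- by move=> x y [e [he ->]] [e' [he' ->]]; exists (e + e'); rewrite mulrDr; split=> //; apply: h1.
- by move=> d x hd [e [he ->]]; exists (d * e); rewrite mulrCA; split=> //; apply: h2.
Qed.

Lemma submodule_mull E z : submodule E -> submodule (fun e => E (z * e)).
Proof.
move=> [h0 h1 h2]; split; first by rewrite mulr0.
- by move=> x y hx hy; rewrite mulrDr; apply: h1.
- by move=> d x hd hx; rewrite mulrCA; apply: h2.
Qed.

Lemma Fbar_of E : submodule E -> (exists x, E x /\ x != 0) -> Fbar D E.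
Proof. by move=> [h0 h1 h2] hx; split. Qed.

Lemma Fbar_ext E F : Fbar D E -> seteq E F -> Fbar D F.
Proof.
move=> hE e; have [[x [hx nz]] _ _ _] := hE; apply: Fbar_of.
  exact: submodule_ext (submodule_Fbar hE) e.
by exists x; split=> //; apply/e.
Qed.

Lemma Fbar_D : Fbar D D.
Proof.
by apply: Fbar_of; [exact: submodule_D | exists 1; split; [exact: D1 | exact: oner_neq0]].
Qed.

Lemma span_submodule s : submodule (span D s).
Proof.
split.
- exists (fun _ => 0); split=> [i|]; first exact: D0.
  by rewrite big1 // => i _; rewrite mul0r.
- move=> x y [d1 [hd1 ->]] [d2 [hd2 ->]]; exists (fun i => d1 i + d2 i); split.
    by move=> i; apply: DD.
  by rewrite -big_split /=; apply: eq_bigr => i _; rewrite mulrDl.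
- move=> c x hc [d1 [hd1 ->]]; exists (fun i => c * d1 i); split.
    by move=> i; apply: DM.
  by rewrite mulr_sumr; apply: eq_bigr => i _; rewrite mulrA.
Qed.

Lemma span_nth s i : (i < size s)%N -> span D s s`_i.
Proof.
move=> hi; exists (fun j => (j == i)%:R); split=> [j|]; first exact: Dbool.
rewrite (bigD1 (Ordinal hi)) //= eqxx mul1r big1 ?addr0 // => j hj.
have -> : (nat_of_ord j == i) = false.
  by apply/negbTE; apply: contra hj => /eqP h; apply/eqP; apply: val_inj.
by rewrite mul0r.
Qed.

Lemma span_sub s E : submodule E -> (forall i, (i < size s)%N -> E s`_i) -> sub (span D s) E.
Proof.
move=> hE hs x [d [hd ->]]; apply: submodule_sum => // i.
by case: hE => _ _ h; apply: h => //; apply: hs.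
Qed.

Lemma Fbar_span s : has (fun a => a != 0) s -> Fbar D (span D s).
Proof.
move=> /(has_nthP 0) [i hi nz]; apply: Fbar_of; first exact: span_submodule.
by exists s`_i; split=> //; exact: span_nth.
Qed.

Lemma fg_span F : fg_nonzero D F ->
  exists s, [/\ seteq F (span D s), has (fun a => a != 0) s, Fbar D F &
                forall i, (i < size s)%N -> F s`_i].
Proof.
move=> [s [es hs]]; exists s; split=> //.
  exact: Fbar_ext (Fbar_span hs) (fun y => iff_sym (es y)).
by move=> i hi; apply/es; apply: span_nth.
Qed.

Lemma content_coef (g : {poly K}) k : content D g g`_k.
Proof.
case: (ltnP k (size g)) => hk; first exact: span_nth.
by rewrite nth_default //; case: (span_submodule (polyseq g)).
Qed.

Lemma content_sub g : DX D g -> sub (content D g) D.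
Proof. by move=> hg; apply: span_sub; [exact: submodule_D | move=> i _; apply: hg]. Qed.

Lemma has_nz_poly (g : {poly K}) : g != 0 -> has (fun a => a != 0) g.
Proof.
move=> nz; apply/(has_nthP 0); exists (size g).-1; first by rewrite prednK // size_poly_gt0.
by move: nz; rewrite -lead_coef_eq0.
Qed.

Lemma colon_content (g : {poly K}) z : colon D (content D g) z <-> forall k, D (z * g`_k).
Proof.
split; first by move=> h k; apply: h; apply: content_coef.
move=> h e; exact: (span_sub (submodule_mull z submodule_D) (fun i _ => h i)).
Qed.

Lemma submodule_coefM E x (f h : {poly K}) : submodule E ->
  (forall a b, E (x * f`_a * h`_b)) -> forall m, E (x * (f * h)`_m).
Proof.
move=> hE hab m; rewrite coefM mulr_sumr; apply: submodule_sum => // i.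
by rewrite mulrA.
Qed.

Lemma DX_mul (f g : {poly K}) : DX D f -> DX D g -> DX D (f * g).
Proof.
move=> hf hg m; rewrite -[_`_m]mul1r; apply: (submodule_coefM submodule_D) => a b.
by rewrite mul1r; apply: DM.
Qed.

Lemma DX1 : DX D 1.
Proof. by move=> i; rewrite coef1; apply: Dbool. Qed.

Lemma DXXn n : DX D 'X^n.
Proof. by move=> i; rewrite coefXn; apply: Dbool. Qed.

Lemma PX_mulr P (f h : {poly K}) : submodule P -> PX P f -> DX D h -> PX P (f * h).
Proof.
move=> hP hf hh m; rewrite -[_`_m]mul1r; apply: (submodule_coefM hP) => a b.
by rewrite mul1r; apply: submodule_mulr.
Qed.

Lemma PX0 P (g : {poly K}) : (forall p, P p -> p = 0) -> PX P g -> g = 0.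
Proof. by move=> h hg; apply/polyP => k; rewrite coef0; apply: h. Qed.

Lemma prime_sub P x : prime_ideal D P -> P x -> D x.
Proof. by case=> h _ _ _ _; apply: h. Qed.

Lemma prime_not1 P : prime_ideal D P -> ~ P 1.
Proof. by case=> _ _ _ _ []. Qed.

Lemma PX_zero_prime P (g : {poly K}) : ~ (exists p, P p /\ p != 0) -> PX P g -> g = 0.
Proof.
move=> nP; apply: PX0 => p Pp; apply: contrapT => /eqP pnz.
by apply: nP; exists p.
Qed.

Lemma prime_outside_neq0 P b : prime_ideal D P -> ~ P b -> b != 0.
Proof. by move=> hP; apply: contra_notN => /eqP ->; case: hP. Qed.

(* Gauss's lemma: P[X] is a prime ideal of D[X].  Compare the coefficient
   of index i + j of f * g, where f_i and g_j are the first coefficients of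
   f and g outside P. *)
Lemma PX_prime P (f g : {poly K}) : prime_ideal D P -> DX D f -> DX D g ->
  PX P (f * g) -> PX P f \/ PX P g.
Proof.
move=> hP hf hg hfg; apply: contrapT => /not_orP [nf ng].
have [i0 fi0] : exists i, ~ P f`_i by apply/existsNP.
have [j0 gj0] : exists j, ~ P g`_j by apply/existsNP.
have [i [fi mi]] := @least_index (fun i => ~ P f`_i) _ fi0.
have [j [gj mj]] := @least_index (fun j => ~ P g`_j) _ gj0.
have hm := submodule_prime hP.
have hi : (i < (i + j).+1)%N by rewrite ltnS leq_addr.
have := hfg (i + j); rewrite coefM (bigD1 (Ordinal hi)) //= addKn.
set r := \sum_(a < _ | _) _ => hs.
have hr : P r.
  case: (hm) => h0 h1 _; apply: (big_ind P) => // a ha.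
  have ha' : (nat_of_ord a != i) by apply: contra ha => /eqP h; apply/eqP; apply: val_inj.
  case: (ltngtP a i) => [lt|gt|eq]; last by rewrite eq eqxx in ha'.
    by apply: (submodule_mulr hm (hg _)); apply: contrapT; apply: mi.
  rewrite mulrC; apply: (submodule_mulr hm (hf _)).
  apply: contrapT; apply: mj; rewrite ltn_subLR; last by rewrite -ltnS.
  by rewrite ltn_add2r.
have : P (f`_i * g`_j) by rewrite -(addrK r (f`_i * g`_j)); apply: submoduleB.
by case: hP => _ _ _ _ [_ /(_ _ _ (hf i) (hg j))] /[apply] [[]].
Qed.

Definition residual (M : K -> Prop) (b : K) : K -> Prop := fun d => D d /\ M (d * b).

Lemma ideal_residual M b : submodule M -> ideal (residual M b).
Proof.
move=> [h0 h1 h2]; split; first by move=> d [].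
split; first by split; [exact: D0 | rewrite mul0r].
- by move=> u v [? ?] [? ?]; split; [apply: DD | rewrite mulrDl; apply: h1].
- by move=> d u hd [? ?]; split; [apply: DM | rewrite -mulrA; apply: h2].
Qed.

Lemma sub_residual M b : ideal M -> D b -> sub M (residual M b).
Proof. by move=> [MD [_ _ hm]] hb d hd; split; [apply: MD | rewrite mulrC; apply: hm]. Qed.

Lemma ideal_chain_union (C : (K -> Prop) -> Prop) : (forall c, C c -> ideal c) ->
  (forall a b, C a -> C b -> sub a b \/ sub b a) -> (exists c, C c) ->
  ideal (fun x => exists c, C c /\ c x).
Proof.
move=> hC ch [c0 Cc0]; split; first by move=> y [c [/hC [hs _] hy]]; apply: hs.
split.
- by exists c0; split=> //; have [_ []] := hC c0 Cc0.
- move=> a b [c [Cc ha]] [c' [Cc' hb]].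
  case: (ch c c' Cc Cc') => s; [exists c' | exists c]; split=> //.
    by have [_ [_ h1 _]] := hC c' Cc'; apply: h1 => //; exact: s.
  by have [_ [_ h1 _]] := hC c Cc; apply: h1 => //; exact: s.
- move=> d a hd [c [Cc ha]]; exists c; split=> //.
  by have [_ [_ _ h2]] := hC c Cc; apply: h2.
Qed.

Definition finitary (J0 : K -> Prop) (Q : (K -> Prop) -> Prop) :=
  forall J, ideal J -> sub J0 J -> Q J -> exists s : seq K,
    (forall i, (i < size s)%N -> J s`_i) /\
    forall J', ideal J' -> sub J0 J' -> (forall i, (i < size s)%N -> J' s`_i) -> Q J'.

Lemma maximal_avoiding_ideal J0 Q : ideal J0 -> ~ Q J0 -> finitary J0 Q ->
  exists M, [/\ ideal M, sub J0 M, ~ Q M &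
    forall J, ideal J -> sub M J -> ~ Q J -> sub J M].
Proof.
move=> hJ0 nQ fin.
pose P J := ideal J /\ ~ Q J.
have PC C : (forall c, C c -> P c /\ sub J0 c) -> (forall a b, C a -> C b -> sub a b \/ sub b a) ->
    (exists c, C c) -> P (fun x => exists c, C c /\ c x).
  move=> hC ch neC.
  have hU := ideal_chain_union (fun c Cc => proj1 (proj1 (hC c Cc))) ch neC.
  have J0U : sub J0 (fun x => exists c, C c /\ c x).
    by case: neC => c Cc x hx; exists c; split=> //; apply: (proj2 (hC c Cc)).
  split=> // QU; have [s [sU Qs]] := fin _ hU J0U QU.
  have C0 c : C c -> c 0 by move=> /hC [[[_ []]]].
  have [c [Cc hc]] := chain_fin ch neC C0 sU.
  have [[hc' nQc] J0c] := hC c Cc.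
  exact: nQc (Qs c hc' J0c hc).
have [M [[hM nQM] J0M hmax]] := zorn_above (conj hJ0 nQ) PC.
by exists M; split=> // J hJ MJ nQJ; apply: hmax.
Qed.

End Domain.

Lemma tofr_inj (K : fieldType) (p q : {poly K}) : tofr p = tofr q -> p = q.
Proof. by move=> h; apply/eqP; rewrite -tofrac_eq; apply/eqP. Qed.

Lemma tofrM (K : fieldType) (p q : {poly K}) : tofr (p * q) = tofr p * tofr q.
Proof. exact: rmorphM. Qed.

Lemma tofrD (K : fieldType) (p q : {poly K}) : tofr (p + q) = tofr p + tofr q.
Proof. exact: rmorphD. Qed.

Lemma tofr_neq0 (K : fieldType) (p : {poly K}) : p != 0 -> tofr p != 0.
Proof. by move=> h; rewrite /tofr tofrac_eq0. Qed.

(* The field identity behind adding one more fraction c / g' to a cleared sum. *)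
Lemma addf_div_mul (F : fieldType) (s b c g g' : F) : g' != 0 ->
  (s + b * (c / g')) * (g * g') = s * g * g' + b * c * g.
Proof. by move=> nz; field. Qed.

Section Circ.
Variable K : fieldType.
Variable D : K -> Prop.
Hypothesis hD : domain_with_qf D.
Variable S : {poly K} -> Prop.
Hypothesis hS : multiplicative D S.

Lemma S_DX g : S g -> DX D g. Proof. by case: hS => h _ _ _; apply: h. Qed.
Lemma S1 : S 1. Proof. by case: hS. Qed.
Lemma SM f g : S f -> S g -> S (f * g). Proof. by case: hS => _ _ h _; apply: h. Qed.
Lemma S_neq0 g : S g -> g != 0.
Proof. by case: hS => _ _ _ h0 Sg; apply/eqP => e; apply: h0; rewrite -e. Qed.

Definition circ_witness (E : K -> Prop) (x : K) := exists g, S g /\ forall k, E (x * g`_k).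

Lemma witness_mulr E x (g h : {poly K}) : submodule D E -> (forall k, E (x * g`_k)) ->
  DX D h -> forall m, E (x * (g * h)`_m).
Proof.
move=> hE hg hh; apply: (submodule_coefM hE) => a b.
exact: (submodule_mulr hE (hh b) (hg a)).
Qed.

(* Clearing denominators: a finite sum of elements of E times fractions
   f / g (g in S) becomes a polynomial with coefficients in E after
   multiplication by a suitable element of S. *)
Lemma EDXS_clear E n (e : nat -> K) (u : nat -> {fraction {poly K}}) : submodule D E ->
  (forall i, (i < n)%N -> E (e i) /\ locS D S (u i)) ->
  exists g (h : {poly K}), [/\ S g, (forall k, E h`_k) &
    (\sum_(i < n) embK (e i) * u i) * tofr g = tofr h].
Proof.
move=> hE; elim: n => [|n IH] hu.
  exists 1, 0; split; [exact: S1 | by move=> k; rewrite coef0; case: hE |].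
  by rewrite big_ord0 mul0r /tofr rmorph0.
have [g [h [Sg hh eq]]] := IH (fun i hi => hu i (ltnW hi)).
have [he [f [g' [Df Sg' eu]]]] := hu n (ltnSn n).
exists (g * g'), (h * g' + (e n)%:P * f * g); split; first exact: SM.
  move=> k; rewrite coefD; case: (hE) => _ hadd hmul; apply: hadd.
    by rewrite -[_`_k]mul1r; apply: (witness_mulr hE _ (S_DX Sg')) => a; rewrite mul1r.
  by rewrite -mulrA coefCM mulrC; apply: hmul => //; exact: (DX_mul hD Df (S_DX Sg) k).
have g'nz : tofr g' != 0 by apply: tofr_neq0; apply: S_neq0.
by rewrite big_ord_recr /= eu tofrD !tofrM -eq /embK addf_div_mul.
Qed.

Lemma circP E x : submodule D E -> (circ D S E x <-> circ_witness E x).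
Proof.
move=> hE; split.
- move=> [n [e [u [hu he]]]]; have [g [h [Sg hh eq]]] := EDXS_clear hE hu.
  exists g; split=> // k; move: eq; rewrite -he /embK /tofr -rmorphM => /tofr_inj eq'.
  by move: (hh k); rewrite -eq' coefCM.
- move=> [g [Sg hg]].
  have nz : tofr g != 0 by apply: tofr_neq0; apply: S_neq0.
  exists (size g), (fun i => x * g`_i), (fun i => tofr 'X^i / tofr g); split.
    move=> i _; split=> //; exists 'X^i, g; split=> //; exact: DXXn.
  under eq_bigr => i _ do rewrite mulrA.
  rewrite -mulr_suml.
  have -> : \sum_(i < size g) embK (x * g`_i) * tofr 'X^i = tofr (x%:P * g).
    rewrite -[in RHS](coefK g) poly_def mulr_sumr /tofr rmorph_sum.
    by apply: eq_bigr => i _; rewrite -mul_polyC mulrA -polyCM /embK -tofrM.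
  by rewrite tofrM mulfK.
Qed.

Lemma circ0 E : circ D S E 0.
Proof.
exists 0%N, (fun _ => 0), (fun _ => 0); split=> //.
by rewrite big_ord0 /embK /tofr polyC0 rmorph0.
Qed.

Lemma sub_circ E : submodule D E -> sub E (circ D S E).
Proof.
move=> hE x hx; apply/(circP _ hE); exists 1; split; first exact: S1.
by move=> k; rewrite coef1; case: (k == 0%N); rewrite ?mulr1 ?mulr0 //; case: hE.
Qed.

Lemma circ_mono E F : submodule D E -> submodule D F -> sub E F -> sub (circ D S E) (circ D S F).
Proof.
move=> hE hF EF x /(circP _ hE) [g [Sg hg]].
by apply/(circP _ hF); exists g; split=> // k; apply: EF.
Qed.

Lemma common_witness E n (y : nat -> K) : submodule D E ->
  (forall k, (k < n)%N -> circ D S E (y k)) ->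
  exists h, S h /\ forall k, (k < n)%N -> forall j, E (y k * h`_j).
Proof.
move=> hE; elim: n => [|n IH] hy; first by exists 1; split=> //; exact: S1.
have [h [Sh hh]] := IH (fun k hk => hy k (ltnW hk)).
have [h' [Sh' hh']] := proj1 (circP _ hE) (hy n (ltnSn n)).
exists (h * h'); split; first exact: SM.
move=> k; rewrite ltnS leq_eqVlt => /orP [/eqP ->|hk] j.
  by rewrite [h * h']mulrC; exact: (witness_mulr hE hh' (S_DX Sh)).
exact: (witness_mulr hE (hh k hk) (S_DX Sh')).
Qed.

Lemma circ_submodule E : submodule D E -> submodule D (circ D S E).
Proof.
move=> hE; split; first exact: circ0.
- move=> x y /(circP _ hE) [g [Sg hg]] /(circP _ hE) [h [Sh hh]].
  apply/(circP _ hE); exists (g * h); split; first exact: SM.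
  move=> k; rewrite mulrDl; case: (hE) => _ hadd _; apply: hadd.
    exact: (witness_mulr hE hg (S_DX Sh)).
  by rewrite [g * h]mulrC; exact: (witness_mulr hE hh (S_DX Sg)).
- move=> d x hd /(circP _ hE) [g [Sg hg]].
  apply/(circP _ hE); exists g; split=> // k.
  by rewrite -mulrA; case: hE => _ _ hm; apply: hm.
Qed.

Lemma Fbar_circ E : Fbar D E -> Fbar D (circ D S E).
Proof.
move=> hE; have hm := submodule_Fbar hE; apply: Fbar_of; first exact: circ_submodule.
by have [[x [hx nz]] _ _ _] := hE; exists x; split=> //; exact: sub_circ.
Qed.

Lemma circ_scale a E : a != 0 -> submodule D E ->
  seteq (circ D S (scale a E)) (scale a (circ D S E)).
Proof.
move=> nz hE y; have hsE := submodule_scale a hE; split.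
- move/(circP _ hsE) => [g [Sg hg]]; exists (y / a); split; last by rewrite mulrC divfK.
  apply/(circP _ hE); exists g; split=> // k; have [e [he ee]] := hg k.
  by rewrite mulrAC ee mulrC mulKf.
- move=> [z [/(circP _ hE) [g [Sg hg]] ->]]; apply/(circP _ hsE); exists g; split=> // k.
  by exists (z * g`_k); split=> //; rewrite mulrA.
Qed.

Lemma circ_idem E : submodule D E -> seteq (circ D S (circ D S E)) (circ D S E).
Proof.
move=> hE x; have hcE := circ_submodule hE; split; last exact: sub_circ.
move/(circP _ hcE) => [g [Sg hg]].
have [h [Sh hh]] := common_witness hE (fun k (_ : (k < size g)%N) => hg k).
apply/(circP _ hE); exists (g * h); split; first exact: SM.
apply: (submodule_coefM hE) => a b; case: (ltnP a (size g)) => ha; first exact: hh.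
by rewrite nth_default // mulr0 mul0r; case: hE.
Qed.

Lemma circ_setI E F : submodule D E -> submodule D F ->
  seteq (circ D S (setI E F)) (setI (circ D S E) (circ D S F)).
Proof.
move=> hE hF x; have hEF := submodule_setI hE hF; split.
  by move=> hx; split; apply: (circ_mono hEF) hx => // y [].
move=> [/(circP _ hE) [g [Sg hg]] /(circP _ hF) [h [Sh hh]]].
apply/(circP _ hEF); exists (g * h); split; first exact: SM.
move=> k; split; first exact: (witness_mulr hE hg (S_DX Sh)).
by rewrite [g * h]mulrC; exact: (witness_mulr hF hh (S_DX Sg)).
Qed.

(* x \in E^circ with witness g already lies in F^circ for the finitely
   generated F spanned by a nonzero e \in E and the coefficients of x * g. *)
Lemma circ_finite E : Fbar D E ->
  seteq (circ D S E) (fun x => exists F, [/\ fg_nonzero D F, sub F E & circ D S F x]).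
Proof.
move=> hE; have hm := submodule_Fbar hE; have [[e [he nz]] _ _ _] := hE; move=> x; split.
- move/(circP _ hm) => [g [Sg hg]]; set s := e :: [seq x * c | c <- polyseq g].
  have hs : submodule D (span D s) := span_submodule hD s.
  exists (span D s); split.
  + by exists s; split=> //=; rewrite nz.
  + by apply: span_sub => // -[|i] //=; rewrite ltnS size_map => hi; rewrite (nth_map 0).
  + apply/(circP _ hs); exists g; split=> // k; case: (ltnP k (size g)) => hk.
      rewrite -(nth_map 0 0 (fun c => x * c) hk).
      by apply: (span_nth hD (i := k.+1)); rewrite /= size_map.
    by rewrite nth_default // mulr0; case: hs.
- move=> [F [hF sFE hx]]; move: hx; apply: circ_mono => //.
  by have [s [_ _ hFF _]] := fg_span hD hF; exact: submodule_Fbar hFF.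
Qed.

Lemma circ_semistar :
  [/\ semistar D (circ D S), stable D (circ D S) & finite_type D (circ D S)].
Proof.
split; [split | |].
- exact: Fbar_circ.
- by move=> a E nz /submodule_Fbar; apply: circ_scale.
- by move=> E F /submodule_Fbar hE /submodule_Fbar hF; apply: circ_mono.
- by move=> E /submodule_Fbar; apply: sub_circ.
- by move=> E /submodule_Fbar; apply: circ_idem.
- by move=> E F /submodule_Fbar hE /submodule_Fbar hF; apply: circ_setI.
- exact: circ_finite.
Qed.

End Circ.

Section PartF.
Variable K : fieldType.
Variable D : K -> Prop.
Hypothesis hD : domain_with_qf D.

Lemma colonD y : colon D D y <-> D y.
Proof.
split; first by move/(_ 1 (D1 hD)); rewrite mulr1.
by move=> hy e he; apply: DM.
Qed.

Lemma vopD y : vop D D y <-> D y.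
Proof.
split; first by move/(_ 1); rewrite mulr1; apply; apply/colonD; apply: D1.
by move=> hy e /colonD he; apply: DM.
Qed.

Lemma NvP g : DX D g -> g != 0 ->
  (Nstar D (vop D) g <-> forall z, colon D (content D g) z -> D z).
Proof.
move=> hg nz; split.
- move=> [_ _ e] z hz.
  have : vop D (content D g) 1 by apply/e; apply/vopD; apply: D1.
  by move/(_ z hz); rewrite mul1r.
- move=> h; split=> // y; split.
  + move=> hy; apply/vopD; rewrite -[y]mulr1; apply: hy.
    by move=> e he; rewrite mul1r; apply: content_sub he.
  + by move/vopD=> hy e he; apply: DM => //; apply: h.
Qed.

Lemma Nv_witness S x : multiplicative D S -> psub S (Nstar D (vop D)) ->
  circ_witness S D x -> D x.
Proof.
move=> hS SN [g [Sg hg]].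
by apply: (proj1 (NvP (S_DX hS Sg) (S_neq0 hS Sg)) (SN _ Sg)); apply/(colon_content hD).
Qed.

Lemma circ_D_iff S : multiplicative D S ->
  (seteq (circ D S D) D <-> psub S (Nstar D (vop D))).
Proof.
move=> hS; have hDm := submodule_D hD; split.
- move=> e g Sg; apply/(NvP (S_DX hS Sg) (S_neq0 hS Sg)) => z /(colon_content hD) hz.
  by apply/(e z)/(circP hD hS _ hDm); exists g.
- move=> SN x; split; last exact: sub_circ.
  by move/(circP hD hS _ hDm); apply: Nv_witness.
Qed.

Lemma D_DP P x : prime_ideal D P -> D x -> DP D P x.
Proof.
move=> hP hx; exists x, 1; split; [by [] | exact: D1 hD | exact: prime_not1 hP | by rewrite divr1].
Qed.

Definition meets (S : {poly K} -> Prop) (J : K -> Prop) := exists g, S g /\ PX J g.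

(* Meeting S is witnessed by the finitely many coefficients of one g. *)
Lemma meets_finitary S J0 : finitary D J0 (meets S).
Proof.
move=> J hJ _ [g [Sg hg]]; exists (polyseq g); split=> [i _|J' [_ hJ'] _ hs]; first exact: hg.
exists g; split=> // k; case: (ltnP k (size g)) => hk; first exact: hs.
by rewrite nth_default //; case: hJ'.
Qed.

(* An ideal maximal among those M with M[X] \cap S empty is prime: if
   a * b \in M with a, b \notin M, then f \in S with f * b \in M[X] and
   g \in S with g * f \in M[X] exist by maximality. *)
Lemma avoiding_prime S M : multiplicative D S -> ideal D M -> ~ meets S M ->
  (forall J, ideal D J -> sub M J -> ~ meets S J -> sub J M) -> prime_ideal D M.
Proof.
move=> hS hM nM hmax; have [hMD hMm] := hM; have [hM0 hMp hMmul] := hMm.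
split=> //; split.
  move=> M1; apply: nM; exists 1; split; first exact: S1 hS.
  by move=> k; rewrite coef1; case: (k == 0%N).
move=> a b ha hb hab; apply: contrapT => /not_orP [na nb].
have [f [Sf hf]] : meets S (residual D M b).
  apply: contrapT => nf; apply: na.
  by apply: (hmax _ (ideal_residual hD b hMm) (sub_residual hM hb) nf a); split.
pose J2 := fun d => D d /\ forall k, M (d * f`_k).
have hJ2 : ideal D J2.
  split; first by move=> d [].
  split; first by split; [exact: D0 | move=> k; rewrite mul0r].
  - by move=> u v [? hu] [? hv]; split; [apply: DD | move=> k; rewrite mulrDl; apply: hMp].
  - by move=> d u hd [? hu]; split; [apply: DM | move=> k; rewrite -mulrA; apply: hMmul].
have MJ2 : sub M J2.
  move=> d hd; split; first by apply: hMD.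
  by move=> k; rewrite mulrC; apply: hMmul => //; apply: S_DX hS _ Sf _.
have [g [Sg hg]] : meets S J2.
  apply: contrapT => ng; apply: nb.
  by apply: (hmax J2 hJ2 MJ2 ng b); split=> // k; rewrite mulrC; case: (hf k).
apply: nM; exists (g * f); split; first exact: (SM hS Sg Sf).
move=> m; rewrite -[_`_m]mul1r; apply: (submodule_coefM hMm) => i j.
by rewrite mul1r; case: (hg i).
Qed.

(* If x \in D_P for all P \in Nabla(S) and no
   g \in S has x * g \in D[X], the ideal (D :_D x) of denominators of x lies
   in an ideal maximal with M[X] \cap S empty; M is a prime of Nabla(S), and
   x \in D_M yields a denominator outside M. *)
Lemma DP_intersection_iff S : multiplicative D S ->
  (psub S (Nstar D (vop D)) <-> (forall x, D x <-> (forall P, Nabla D S P -> DP D P x))).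
Proof.
move=> hS; split; last first.
  move=> hI; apply/(circ_D_iff hS) => x; split; last exact: (sub_circ hD hS (submodule_D hD)).
  move/(circP hD hS _ (submodule_D hD)) => [g [Sg hg]]; apply/hI => P [[hP hPS] _].
  have [k hk] : exists k, ~ P g`_k by apply/existsNP; apply: hPS.
  have nz := prime_outside_neq0 hP hk.
  by exists (x * g`_k), g`_k; split; [exact: hg | exact: (S_DX hS Sg) | exact: hk | rewrite mulfK].
move=> SN x; split; first by move=> hx P [[hP _] _]; apply: D_DP.
move=> hx; pose I := residual D D x.
have hI : ideal D I := ideal_residual hD x (submodule_D hD).
have [[g [Sg hg]]|nI] := pselect (meets S I).
  by apply: (Nv_witness hS SN); exists g; split=> // k; rewrite mulrC; case: (hg k).
have [M [hM IM nM hmax]] := maximal_avoiding_ideal hI nI (meets_finitary (S := S) (J0 := I)).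
have hPM := avoiding_prime hS hM nM hmax.
have hNab : Nabla D S M.
  split; first by split=> // g Sg hg; apply: nM; exists g.
  move=> Q [hQ hQS] hMQ; apply: hmax => //.
    by split; [move=> y; apply: prime_sub | apply: submodule_prime].
  by move=> [g [Sg hg]]; apply: (hQS g Sg).
have [a [b [ha hb nb ex]]] := hx M hNab.
have nz := prime_outside_neq0 hPM nb.
by case: nb; apply: (IM b); split=> //; rewrite ex mulrC divfK.
Qed.

End PartF.

Section Injectivity.
Variable K : fieldType.
Variable D : K -> Prop.
Hypothesis hD : domain_with_qf D.

Definition PDP (P : K -> Prop) : K -> Prop :=
  fun y => exists a b, [/\ P a, D b, ~ P b & y = a / b].

Lemma Fbar_PDP P : prime_ideal D P -> (exists p, P p /\ p != 0) -> Fbar D (PDP P).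
Proof.
move=> hP [p [Pp pnz]]; have [hPD hP0 hPp hPm [nP1 hpr]] := hP.
split.
- by exists p; split=> //; exists p, 1; split=> //; [exact: D1 | rewrite divr1].
- by exists 0, 1; split=> //; [exact: D1 | rewrite mul0r].
- move=> y z [a [b [Pa Db nb ->]]] [a' [b' [Pa' Db' nb' ->]]].
  exists (a * b' + a' * b), (b * b'); split.
  + by apply: hPp; rewrite mulrC; apply: hPm.
  + exact: DM.
  + by case/hpr.
  + by rewrite addf_div //; apply: (prime_outside_neq0 hP).
- move=> d y hd [a [b [Pa Db nb ->]]]; exists (d * a), b; split=> //.
  + exact: hPm.
  + by rewrite mulrA.
Qed.

Lemma PDP_contract P y : prime_ideal D P -> D y -> PDP P y -> P y.
Proof.
move=> hP hy [a [b [Pa Db nb e]]].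
have : P (y * b) by rewrite e divfK //; apply: (prime_outside_neq0 hP).
by case: hP => _ _ _ _ [_ /(_ _ _ hy Db)] /[apply] [[]].
Qed.

(* For g \in T1 and a prime P with g \in P[X], 1 lies in
   (P D_P)^circ_T1 = (P D_P)^circ_T2, which produces h \in T2 \cap P[X]. *)
Lemma circ_injective T1 T2 : multiplicative D T1 -> multiplicative D T2 ->
  ext_saturated D T2 -> star_eq D (circ D T1) (circ D T2) -> psub T1 T2.
Proof.
move=> h1 h2 s2 heq g Tg; apply/s2; split; first exact: S_DX h1 _ Tg.
move=> P [hP hPT] hPg.
have [hnz|nP] := pselect (exists p, P p /\ p != 0); last first.
  by move: (S_neq0 h1 Tg); rewrite (PX_zero_prime nP hPg) eqxx.
have hE := Fbar_PDP hP hnz; have hm := submodule_Fbar hE.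
have : circ D T1 (PDP P) 1.
  apply/(circP hD h1 _ hm); exists g; split=> // k.
  by exists g`_k, 1; rewrite mul1r divr1; split=> //; [exact: D1 | exact: prime_not1 hP].
move/(heq _ hE)/(circP hD h2 _ hm) => [h [Th hh]].
apply: (hPT h Th) => k; apply: (PDP_contract hP (S_DX h2 Th k)).
by rewrite -[h`_k]mul1r.
Qed.

End Injectivity.

Section StableFiniteType.
Variable K : fieldType.
Variable D : K -> Prop.
Hypothesis hD : domain_with_qf D.
Variable star : (K -> Prop) -> (K -> Prop).
Hypothesis hss : semistar D star.
Hypothesis hst : stable D star.
Hypothesis hft : finite_type D star.

Lemma star_Fbar E : Fbar D E -> Fbar D (star E). Proof. by case: hss => h _ _ _ _; apply: h. Qed.
Lemma star_scale x E : x != 0 -> Fbar D E -> seteq (star (scale x E)) (scale x (star E)).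
Proof. by case: hss => _ h _ _ _; apply: h. Qed.
Lemma star_mono E F : Fbar D E -> Fbar D F -> sub E F -> sub (star E) (star F).
Proof. by case: hss => _ _ h _ _; apply: h. Qed.
Lemma star_ext E : Fbar D E -> sub E (star E). Proof. by case: hss => _ _ _ h _; apply: h. Qed.
Lemma star_idem E : Fbar D E -> seteq (star (star E)) (star E).
Proof. by case: hss => _ _ _ _ h; apply: h. Qed.

Lemma star_seteq E F : Fbar D E -> Fbar D F -> seteq E F -> seteq (star E) (star F).
Proof. by move=> hE hF e x; split; apply: star_mono => // y /e. Qed.

Lemma Fbar_scale x E : x != 0 -> Fbar D E -> Fbar D (scale x E).
Proof.
move=> nz hE; have [[e [he ne]] _ _ _] := hE; apply: Fbar_of.
  exact: submodule_scale (submodule_Fbar hE).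
by exists (x * e); split; [exists e | rewrite mulf_neq0].
Qed.

Lemma Fbar_prime P : prime_ideal D P -> (exists p, P p /\ p != 0) -> Fbar D P.
Proof. by move=> hP [p [Pp nz]]; apply: Fbar_of; [exact: submodule_prime | exists p]. Qed.

(* Since K is the quotient field of D, (F :_D x) is nonzero for F \in Fbar(D):
   if e = a / b \in F and x = p / q, then q * a * x = p * b * e. *)
Lemma Fbar_residual x F : x != 0 -> Fbar D F -> Fbar D (residual D F x).
Proof.
move=> nx hF; have hm := submodule_Fbar hF; apply: Fbar_of.
  by case: (ideal_residual hD x hm).
have [[e [he ne]] _ _ h2] := hF; case: hD => _ _ _ _ hq.
have [a [b [Da Db bnz ea]]] := hq e; have [p [q [Dp Dq qnz ex]]] := hq x.
have anz : a != 0 by apply: contra ne => /eqP a0; rewrite ea a0 mul0r.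
exists (q * a); split; last by rewrite mulf_neq0.
split; first exact: DM.
have -> : q * a * x = (p * b) * e by rewrite ex ea; field; rewrite bnz qnz.
by apply: h2 => //; apply: DM.
Qed.

(* x \in F^star iff 1 \in (F :_D x)^star: stability gives
   (xD \cap F)^star = xD^star \cap F^star, and xD \cap F = x (F :_D x). *)
Lemma star_residualP x F : x != 0 -> Fbar D F -> (star F x <-> star (residual D F x) 1).
Proof.
move=> nx hF; have hI := Fbar_residual nx hF; have hsI := Fbar_scale nx hI; split.
- move=> hx; have hX := Fbar_scale nx (Fbar_D hD).
  have e : seteq (setI (scale x D) F) (scale x (residual D F x)).
    move=> y; split.
    + by move=> [[d [hd ->]] hy]; exists d; split=> //; split=> //; rewrite mulrC.
    + by move=> [d [[hd hdx] ->]]; split; [exists d | rewrite mulrC].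
  have hXF := Fbar_ext hsI (fun y => iff_sym (e y)).
  have : star (setI (scale x D) F) x.
    apply/(hst hX hF); split=> //; apply: star_ext => //.
    by exists 1; split; [exact: D1 | rewrite mulr1].
  move/(star_seteq hXF hsI e)/(star_scale nx hI) => [e1 [he1 ee]].
  by rewrite (_ : 1 = e1) //; apply: (mulfI nx); rewrite mulr1.
- move=> h1; apply: (star_mono hsI hF); first by move=> y [d [[hd hdx] ->]]; rewrite mulrC.
  by apply/(star_scale nx hI); exists 1; rewrite mulr1.
Qed.

Definition Sstar : {poly K} -> Prop := fun g => [/\ DX D g, g != 0 &
  forall P, prime_ideal D P -> (exists p, P p /\ p != 0) -> ~ star P 1 -> ~ PX P g].

Lemma Sstar_Poly s : (forall i, (i < size s)%N -> D s`_i) -> has (fun a => a != 0) s ->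
  star (span D s) 1 -> Sstar (Poly s).
Proof.
move=> hs hnz h1; split.
- move=> i; rewrite coef_Poly; case: (ltnP i (size s)) => hi; first exact: hs.
  by rewrite nth_default //; exact: D0.
- move: hnz => /(has_nthP 0) [i hi nz]; apply: contra nz => /eqP e.
  by rewrite -coef_Poly e coef0.
- move=> P hP hPnz nP hPX; apply: nP.
  apply: (star_mono (Fbar_span hD hnz) (Fbar_prime hP hPnz)) h1.
  apply: span_sub; first exact: submodule_prime.
  by move=> i hi; rewrite -coef_Poly.
Qed.

(* Sstar is multiplicative, by Gauss's lemma. *)
Lemma Sstar_mult : multiplicative D Sstar.
Proof.
split.
- by move=> g [].
- split; [exact: (DX1 hD) | exact: oner_neq0 | ].
  by move=> P hP _ _ /(_ 0%N); rewrite coef1 /=; apply: (prime_not1 hP).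
- move=> f g [hf fnz hfP] [hg gnz hgP]; split.
  + exact: (DX_mul hD hf hg).
  + exact: mulf_neq0.
  + move=> P hP hPnz nP hfg.
    by case: (PX_prime hD hP hf hg hfg); [apply: hfP | apply: hgP].
- by move=> [_ /eqP].
Qed.

(* The zero ideal is prime; it witnesses that 0 is outside an extended saturated set. *)
Lemma zero_prime : prime_ideal D (fun x => x = 0).
Proof.
split.
- by move=> x ->; exact: D0.
- by [].
- by move=> x y -> ->; rewrite addr0.
- by move=> d x _ ->; rewrite mulr0.
- split; first by move=> e; move: (@oner_neq0 K); rewrite e eqxx.
  by move=> x y _ _ /eqP; rewrite mulf_eq0 => /orP [] /eqP; [left|right].
Qed.

(* The point is that a nonzero prime P with
   1 \in P^star meets Sstar in P[X]: by finite type some finitely generated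
   F = (s) \subseteq P has 1 \in F^star, and then Poly s \in Sstar. *)
Lemma Sstar_sat : ext_saturated D Sstar.
Proof.
move=> g; split.
- move=> Sg; have [hg gnz hgP] := Sg; split=> // P [hP hPT] hPg.
  have [hnz|nP] := pselect (exists p, P p /\ p != 0); last first.
    by move: gnz; rewrite (PX_zero_prime nP hPg) eqxx.
  apply: (hgP P hP hnz) hPg => h1.
  have [F [hFfg sFP hF1]] := proj1 (hft (Fbar_prime hP hnz) 1) h1.
  have [s [es hnzs hF sF]] := fg_span hD hFfg.
  have hsP i : (i < size s)%N -> P s`_i by move/sF; apply: sFP.
  apply: (hPT (Poly s)).
    apply: Sstar_Poly => //; first by move=> i /hsP; apply: prime_sub hP.
    by apply/(star_seteq hF (Fbar_span hD hnzs) es).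
  move=> i; rewrite coef_Poly; case: (ltnP i (size s)) => hi; first exact: hsP.
  by rewrite nth_default //; case: hP.
- move=> [hg hgP]; split=> //.
  + apply/eqP => g0; apply: (hgP (fun x => x = 0)); last by rewrite g0 => k; rewrite coef0.
    split; first exact: zero_prime.
    move=> h [_ hnz _] hh.
    by move: hnz; rewrite (PX0 (fun p (e : p = 0) => e) hh) eqxx.
  + move=> P hP hPnz nP; apply: hgP; split=> //.
    by move=> h [_ _ hh]; apply: hh.
Qed.

Lemma star_one_finitary J0 : (exists p, J0 p /\ p != 0) -> finitary D J0 (fun J => star J 1).
Proof.
move=> [c0 [hc0 c0nz]] J [_ hJ] J0J hJ1.
have hJF : Fbar D J by apply: Fbar_of => //; exists c0; split=> //; apply: J0J.
have [F [hFfg sFJ hF1]] := proj1 (hft hJF 1) hJ1.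
have [s [es hnzs hF sF]] := fg_span hD hFfg.
exists s; split; first by move=> i /sF; apply: sFJ.
move=> J' [_ hJ'] J0J' sJ'.
have hJ'F : Fbar D J' by apply: Fbar_of => //; exists c0; split=> //; apply: J0J'.
apply: (star_mono (Fbar_span hD hnzs) hJ'F); first exact: span_sub.
by apply/(star_seteq hF (Fbar_span hD hnzs) es).
Qed.

(* An ideal M maximal with 1 \notin M^star is prime: if a * b \in M with
   a, b \notin M, maximality gives 1 \in (M :_D b)^star, hence b \in M^star,
   and then 1 \in (D \cap M^star)^star \subseteq M^star. *)
Lemma star_avoiding_prime M : ideal D M -> (exists p, M p /\ p != 0) -> ~ star M 1 ->
  (forall J, ideal D J -> sub M J -> ~ star J 1 -> sub J M) -> prime_ideal D M.
Proof.
move=> hM [c0 [hc0 c0nz]] nM hmax; have [hMD hMm] := hM; have [hM0 hMp hMmul] := hMm.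
have hMF : Fbar D M by apply: Fbar_of => //; exists c0.
split=> //; split; first by move=> M1; apply: nM; apply: star_ext.
move=> a b ha hb hab; apply: contrapT => /not_orP [na nb].
have bnz : b != 0 by apply: contra_notN nb => /eqP ->; case: hMm.
have sMb : star M b.
  apply/(star_residualP bnz hMF); apply: contrapT => n1; apply: na.
  by apply: (hmax _ (ideal_residual hD b hMm) (sub_residual hM hb) n1 a); split.
have hsM := star_Fbar hMF.
pose J2 := setI D (star M).
have hJ2 : ideal D J2.
  by split; [move=> d [] | apply: submodule_setI (submodule_D hD) (submodule_Fbar hsM)].
have MJ2 : sub M J2 by move=> d hd; split; [apply: hMD | apply: star_ext].
have hJ2F : Fbar D J2 by apply: Fbar_of; [case: hJ2 | exists c0; split=> //; apply: MJ2].
have sJ2 : star J2 1.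
  by apply: contrapT => n2; apply: nb; apply: (hmax J2 hJ2 MJ2 n2 b).
apply: nM; apply/(star_idem hMF).
by apply: (star_mono hJ2F hsM) sJ2 => y [].
Qed.

(* The key point of (g): 1 \in c(g)^star for every g \in Sstar.  Otherwise
   c(g) lies in a prime M maximal with 1 \notin M^star, and g \in M[X]. *)
Lemma Sstar_content g : Sstar g -> star (content D g) 1.
Proof.
move=> [hg gnz hgP]; have hcF := Fbar_span hD (has_nz_poly gnz).
have [[c0 [hc0 c0nz]] _ _ _] := hcF.
have c0J : exists p, content D g p /\ p != 0 by exists c0.
apply: contrapT => nc.
have hJ0 : ideal D (content D g) by split; [exact: content_sub | exact: span_submodule].
have [M [hM cM nM hmax]] := maximal_avoiding_ideal hJ0 nc (star_one_finitary c0J).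
have hMnz : exists p, M p /\ p != 0 by exists c0; split=> //; apply: cM.
apply: (hgP M (star_avoiding_prime hM hMnz nM hmax) hMnz nM) => k.
by apply: cM; exact: content_coef.
Qed.

(* For x \in E^circ with witness g,
   x c(g) \subseteq E and 1 \in c(g)^star give x \in E^star.  Conversely
   x \in E^star gives 1 \in (E :_D x)^star, hence 1 \in (span s)^star for a
   finite s \subseteq (E :_D x), and Poly s \in Sstar is a witness for x. *)
Lemma circ_Sstar : star_eq D (circ D Sstar) star.
Proof.
move=> E hE; have hm := submodule_Fbar hE; move=> x; split.
- move/(circP hD Sstar_mult _ hm) => [g [Sg hg]].
  have [->|nx] := eqVneq x 0; first by case: (star_Fbar hE).
  have hcF : Fbar D (content D g) := Fbar_span hD (has_nz_poly (S_neq0 Sstar_mult Sg)).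
  have hsc := Fbar_scale nx hcF.
  apply: (star_mono hsc hE).
    move=> y [e [he ->]]; move: e he.
    by apply: span_sub; [exact: submodule_mull | move=> i _; apply: hg].
  by apply/(star_scale nx hcF); exists 1; split; [apply: Sstar_content | rewrite mulr1].
- move=> hx; have [->|nx] := eqVneq x 0; first exact: circ0.
  have hI := Fbar_residual nx hE.
  have [F [hFfg sFI hF1]] := proj1 (hft hI 1) (proj1 (star_residualP nx hE) hx).
  have [s [es hnzs hF sF]] := fg_span hD hFfg.
  have hsI i : (i < size s)%N -> D s`_i /\ E (s`_i * x) by move/sF; apply: sFI.
  have Ss : Sstar (Poly s).
    apply: Sstar_Poly => //; first by move=> i /hsI [].
    by apply/(star_seteq hF (Fbar_span hD hnzs) es).
  apply/(circP hD Sstar_mult _ hm); exists (Poly s); split=> // k.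
  rewrite coef_Poly; case: (ltnP k (size s)) => hk; first by rewrite mulrC; case: (hsI k hk).
  by rewrite nth_default // mulr0; case: hm.
Qed.

End StableFiniteType.

Section PartH.
Variable K : fieldType.
Variable D : K -> Prop.
Hypothesis hD : domain_with_qf D.

Lemma frac_inv_eq (g n f : {poly K}) : g != 0 -> n != 0 ->
  tofr 1 / tofr g = tofr f / tofr n -> n = f * g.
Proof.
move=> gz nz /eqP; rewrite eqr_div ?tofr_neq0 // -!tofrM mul1r => /eqP.
exact: tofr_inj.
Qed.

(* (h): 1 / g lies in both localizations for g in either set; writing
   1 / g = f / n identifies n = f * g, and both N^v and the extended
   saturated S are closed under taking such factors g. *)
Lemma Na_iff S : multiplicative D S -> ext_saturated D S ->
  ((forall u, Na D (vop D) u <-> locS D S u) <-> pseteq S (Nstar D (vop D))).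
Proof.
move=> hS hsat; split; last first.
  by move=> SN u; split=> -[f [g [hf hg ->]]]; exists f, g; split=> //; apply/SN.
move=> hNa g; split.
- move=> Sg; have gnz := S_neq0 hS Sg; have hgD := S_DX hS Sg.
  have : locS D S (tofr 1 / tofr g) by exists 1, g; split=> //; exact: DX1.
  move/hNa => [f [n [Df Nn e]]]; have [hnD nnz _] := Nn.
  have en := frac_inv_eq gnz nnz e.
  apply/(NvP hD hgD gnz) => z hz.
  apply: (proj1 (NvP hD hnD nnz) Nn z); apply/(colon_content hD) => m.
  rewrite en [f * g]mulrC; apply: (submodule_coefM (submodule_D hD)) => a b.
  by apply: (DM hD); [move: hz => /(colon_content hD) | exact: Df].
- move=> Ng; have [hgD gnz _] := Ng.
  have : Na D (vop D) (tofr 1 / tofr g) by exists 1, g; split=> //; exact: DX1.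
  move/hNa => [f [s [Df Ss e]]].
  have es := frac_inv_eq gnz (S_neq0 hS Ss) e.
  apply/hsat; split=> // P [hP hPS] hPg.
  by apply: (hPS s Ss); rewrite es mulrC; exact: (PX_mulr (submodule_prime hP) hPg Df).
Qed.

End PartH.

Theorem theorem2p1 (K : fieldType) (D : K -> Prop) (hD : domain_with_qf D)
  (S : {poly K} -> Prop) (hS : multiplicative D S) :
  (* (f) *)
  ((seteq (circ D S D) D <-> psub S (Nstar D (vop D))) /\
   (psub S (Nstar D (vop D)) <->
      (forall x, D x <-> (forall P, Nabla D S P -> DP D P x)))) /\
  (* (g) *)
  ((forall T, multiplicative D T -> ext_saturated D T ->
      [/\ semistar D (circ D T), stable D (circ D T) & finite_type D (circ D T)]) /\
   (forall T1 T2, multiplicative D T1 -> ext_saturated D T1 ->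
      multiplicative D T2 -> ext_saturated D T2 ->
      star_eq D (circ D T1) (circ D T2) -> pseteq T1 T2) /\
   (forall star, semistar D star -> stable D star -> finite_type D star ->
      exists T, [/\ multiplicative D T, ext_saturated D T & star_eq D (circ D T) star]) /\
   (forall T, multiplicative D T -> ext_saturated D T -> psub T (Nstar D (vop D)) ->
      semistar_star D (circ D T)) /\
   (forall star, semistar_star D star -> stable D star -> finite_type D star ->
      exists T, [/\ multiplicative D T, ext_saturated D T,
                    psub T (Nstar D (vop D)) & star_eq D (circ D T) star])) /\
  (* (h) *)
  (ext_saturated D S ->
     ((forall u, Na D (vop D) u <-> locS D S u) <-> pseteq S (Nstar D (vop D)))).
Proof.
split; first by split; [exact: circ_D_iff | exact: DP_intersection_iff].
split; last exact: Na_iff.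
have Sstar_props star : semistar D star -> stable D star -> finite_type D star ->
    [/\ multiplicative D (Sstar D star), ext_saturated D (Sstar D star) &
        star_eq D (circ D (Sstar D star)) star].
  by move=> hs hst hft; split; [exact: Sstar_mult | exact: Sstar_sat | exact: circ_Sstar].
split; first by move=> T hT _; apply: circ_semistar.
split.
  move=> T1 T2 h1 s1 h2 s2 heq g; split; first exact: (circ_injective hD h1 h2 s2 heq).
  by apply: (circ_injective hD h2 h1 s1) => E hE y; apply: iff_sym (heq E hE y).
split; first by move=> star hs hst hft; exists (Sstar D star); apply: Sstar_props.
split.
  move=> T hT _ hN; split; first by case: (circ_semistar hD hT).
  by apply/(circ_D_iff hD hT).
move=> star [hs hDD] hst hft; have [hm hsat heq] := Sstar_props star hs hst hft.
exists (Sstar D star); split=> //; apply/(circ_D_iff hD hm) => y.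
exact: iff_trans (heq D (Fbar_D hD) y) (hDD y).
Qed.
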